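(* Let $X$ be a countable infinite set, $\mathcal{I}$ a $p^+$ and hereditarily meager ideal on $X$, and $\tau$ an $\mathcal{I}$-crowded topology on $X$ with $\pi w(\tau)<\mathfrak{m}_c$. Suppose $\langle D_i:i\in\omega\rangle$ is a decreasing sequence of $(\mathcal{I},\tau)$-crowded $\tau$-dense subsets of $X$. Then there are finite sets $K_i\subseteq D_i$ ($i\in\omega$) such that $\bigcup_{i\in\omega}K_i$ is $\tau$-dense and $(\mathcal{I},\tau)$-crowded.
   Context: An ideal on $X$ is a family of subsets of $X$ closed under subsets and finite unions; all ideals are assumed proper ($X\notin\mathcal{I}$) and free (every finite subset of $X$ is in $\mathcal{I}$). $\mathcal{I}^+=\mathcal{P}(X)\setminus\mathcal{I}$. Subsets of $X$ are identified with points of $2^X$. $\mathcal{I}$ is hereditarily meager if for every $A\in\mathcal{I}^+$, $\mathcal{I}\cap\mathcal{P}(A)$ is meager in $2^A$. $\mathcal{I}$ is $p^+$ if for every decreasing sequence $(A_n)_n$ of sets in $\mathcal{I}^+$ there is $A\in\mathcal{I}^+$ with $A\setminus A_n$ finite for all $n$. A topology $\tau$ on $X$ is $\mathcal{I}$-crowded if $\tau\cap\mathcal{I}=\{\emptyset\}$. A set $A\subseteq X$ is $(\mathcal{I},\tau)$-crowded if for every $U\in\tau$, $A\cap U$ is either empty or in $\mathcal{I}^+$. $\mathfrak{m}_c$ is the least cardinal $\kappa$ such that MA$(\kappa)$ for countable posets fails. $\pi w$ denotes $\pi$-weight. *)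

From Stdlib Require Import List.
Import ListNotations.

Definition subset {X : Type} (A B : X -> Prop) : Prop := forall x, A x -> B x.

Definition finite {X : Type} (A : X -> Prop) : Prop :=
  exists l : list X, forall x, A x -> In x l.

Definition countably_infinite (X : Type) : Prop :=
  (exists f : X -> nat, forall x y, f x = f y -> x = y) /\ ~ finite (fun _ : X => True).

Definition is_ideal {X : Type} (I : (X -> Prop) -> Prop) : Prop :=
  (forall A B, I B -> subset A B -> I A) /\
  (forall A B, I A -> I B -> I (fun x => A x \/ B x)) /\
  ~ I (fun _ => True) /\
  (forall A, finite A -> I A).

(* basic clopen set of 2^A given by finite lists s (forced in) and t (forced out) *)
Definition cyl {X : Type} (s t : list X) (B : X -> Prop) : Prop :=
  (forall x, In x s -> B x) /\ (forall x, In x t -> ~ B x).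

Definition cond_in {X : Type} (A : X -> Prop) (s t : list X) : Prop :=
  (forall x, In x s -> A x) /\ (forall x, In x t -> A x) /\
  (forall x, In x s -> In x t -> False).

(* N is nowhere dense in 2^A: every nonempty basic open set has a nonempty
   basic open subset disjoint from N *)
Definition nowhere_dense_in {X : Type} (A : X -> Prop) (N : (X -> Prop) -> Prop) : Prop :=
  forall s t, cond_in A s t ->
    exists s' t', cond_in A s' t' /\ incl s s' /\ incl t t' /\
      forall B, subset B A -> cyl s' t' B -> ~ N B.

Definition meager_in {X : Type} (A : X -> Prop) (M : (X -> Prop) -> Prop) : Prop :=
  exists N : nat -> (X -> Prop) -> Prop,
    (forall n, nowhere_dense_in A (N n)) /\
    forall B, subset B A -> M B -> exists n, N n B.

Definition hereditarily_meager {X : Type} (I : (X -> Prop) -> Prop) : Prop :=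
  forall A, ~ I A -> meager_in A (fun B => subset B A /\ I B).

Definition p_plus {X : Type} (I : (X -> Prop) -> Prop) : Prop :=
  forall An : nat -> X -> Prop,
    (forall n, ~ I (An n)) -> (forall n, subset (An (S n)) (An n)) ->
    exists A, ~ I A /\ forall n, finite (fun x => A x /\ ~ An n x).

Definition is_topology {X : Type} (tau : (X -> Prop) -> Prop) : Prop :=
  tau (fun _ => False) /\ tau (fun _ => True) /\
  (forall U V, tau U -> tau V -> tau (fun x => U x /\ V x)) /\
  (forall F : (X -> Prop) -> Prop, (forall U, F U -> tau U) ->
     tau (fun x => exists U, F U /\ U x)).

Definition nonempty {X : Type} (A : X -> Prop) : Prop := exists x, A x.

Definition I_crowded_topology {X : Type} (I tau : (X -> Prop) -> Prop) : Prop :=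
  forall U, tau U -> I U -> forall x, ~ U x.

Definition I_tau_crowded {X : Type} (I tau : (X -> Prop) -> Prop) (A : X -> Prop) : Prop :=
  forall U, tau U -> (forall x, ~ (A x /\ U x)) \/ ~ I (fun x => A x /\ U x).

Definition dense {X : Type} (tau : (X -> Prop) -> Prop) (A : X -> Prop) : Prop :=
  forall U, tau U -> nonempty U -> exists x, A x /\ U x.

Definition is_pi_base {X J : Type} (tau : (X -> Prop) -> Prop) (B : J -> X -> Prop) : Prop :=
  (forall j, tau (B j) /\ nonempty (B j)) /\
  (forall U, tau U -> nonempty U -> exists j, subset (B j) U).

Definition is_poset {P : Type} (le : P -> P -> Prop) : Prop :=
  (forall p, le p p) /\ (forall p q r, le p q -> le q r -> le p r) /\
  (forall p q, le p q -> le q p -> p = q).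

Definition countable_type (P : Type) : Prop :=
  exists f : P -> nat, forall x y, f x = f y -> x = y.

Definition dense_in_poset {P : Type} (le : P -> P -> Prop) (D : P -> Prop) : Prop :=
  forall p, exists q, le q p /\ D q.

Definition is_filter {P : Type} (le : P -> P -> Prop) (G : P -> Prop) : Prop :=
  (exists p, G p) /\ (forall p q, G p -> le p q -> G q) /\
  (forall p q, G p -> G q -> exists r, G r /\ le r p /\ le r q).

(* MA(|J|) for countable posets: every family of (at most) |J| dense subsets
   of a nonempty countable poset is met by a filter *)
Definition MA_countable (J : Type) : Prop :=
  forall (P : Type) (le : P -> P -> Prop),
    is_poset le -> countable_type P -> inhabited P ->
    forall D : J -> P -> Prop, (forall j, dense_in_poset le (D j)) ->
    exists G, is_filter le G /\ forall j, exists p, G p /\ D j p.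

(* pi w(tau) < m_c  <->  MA(pi w(tau)) for countable posets holds
   <-> some pi-base B of tau satisfies MA(|B|)  (MA(kappa) is downward monotone) *)
Definition piweight_lt_mc {X : Type} (tau : (X -> Prop) -> Prop) : Prop :=
  exists (J : Type) (B : J -> X -> Prop), is_pi_base tau B /\ MA_countable J.

(* Fix a pi-base (B_j)_(j in J) of tau with MA(|J|) for countable posets.  For
   each j, p+ yields an I-positive A_j inside B_j /\ D_0 that is almost
   contained in every D_n, and hereditary meagerness covers I /\ P(A_j) by
   nowhere dense sets N_(j,m).  Force with the countable poset of finite
   approximations (s, t, n) of a set K (s inside K, t outside K, points added
   later taken from D_n): a filter meeting the |J x nat| dense sets "the trace
   of K on A_j misses N_(j,m)" gives K with K \ D_k finite for every k and
   K /\ A_j not in I for every j, so K is dense and (I,tau)-crowded.  As X is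
   countable, K splits into finite pieces K_i of D_i.  MA(|J|) implies
   MA(|J x nat|) because |J x nat| = |J| for infinite J, which is proved with
   Zorn's lemma. *)

From Stdlib Require Import List Arith Lia Classical ClassicalEpsilon Cantor.
From mathcomp Require classical_sets boolp.
Import ListNotations.

Set Implicit Arguments.

Lemma Zorn_union (T : Type) (P : (T -> Prop) -> Prop) :
  (forall F : (T -> Prop) -> Prop, (forall A, F A -> P A) ->
     (forall A B, F A -> F B -> subset A B \/ subset B A) ->
     P (fun x => exists A, F A /\ A x)) ->
  exists A, P A /\ forall B, subset A B -> P B -> subset B A.
Proof.
intros Hchain.
destruct (@classical_sets.Zorn_bigcup T P) as [A [PA Amax]].
- intros F FP Ftot.
  replace (classical_sets.bigcup F (fun A => A)) with (fun x => exists A, F A /\ A x).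
  + exact (Hchain F FP Ftot).
  + apply boolp.funext; intro x; apply boolp.propext; split.
    * intros [B [FB Bx]]; exists B; auto.
    * intros [B FB Bx]; eauto.
- exists A; split; auto. intros B AB PB.
  apply NNPP; intro BA. exact (Amax B (conj AB BA) PB).
Qed.

Lemma infinite_injection (J : Type) (Q : J -> Prop) :
  ~ finite Q -> exists g : nat -> J, (forall n, Q (g n)) /\ (forall n m, g n = g m -> n = m).
Proof.
intro Qinf.
assert (Hfresh : forall l : list J, exists y, Q y /\ ~ In y l).
{ intro l. apply NNPP; intro C. apply Qinf. exists l. intros y Qy.
  apply NNPP; intro Hy. apply C; eauto. }
destruct (choice _ Hfresh) as [fresh Hf].
pose (prefix := fix prefix n := match n with 0 => [] | S k => fresh (prefix k) :: prefix k end).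
assert (Hprefix : forall n m, n < m -> In (fresh (prefix n)) (prefix m)).
{ intros n m Hnm; induction Hnm; simpl; auto. }
exists (fun n => fresh (prefix n)); split.
- intro n; apply Hf.
- intros n m E. destruct (Nat.lt_trichotomy n m) as [h|[h|h]]; auto; exfalso.
  + apply (proj2 (Hf (prefix m))). rewrite <- E. auto.
  + apply (proj2 (Hf (prefix n))). rewrite E. auto.
Qed.

Section SelfProductNat.
Variable J : Type.

Definition graph_root (Phi : (J * nat) * J -> Prop) (j : J) : Prop :=
  exists m z, Phi ((j, m), z).

(* [Phi] is the graph of a bijection from [S * nat] onto [S], where [S] is its set of roots. *)
Record self_prod_graph (Phi : (J * nat) * J -> Prop) : Prop := {
  graph_functional : forall a y y', Phi (a, y) -> Phi (a, y') -> y = y';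
  graph_injective : forall a a' y, Phi (a, y) -> Phi (a', y) -> a = a';
  graph_total : forall j m z m', Phi ((j, m), z) -> exists z', Phi ((j, m'), z');
  graph_range : forall a y, Phi (a, y) -> graph_root Phi y;
  graph_onto : forall j, graph_root Phi j -> exists a, Phi (a, j) }.

Lemma self_prod_graph_chain (F : ((J * nat) * J -> Prop) -> Prop) :
  (forall Phi, F Phi -> self_prod_graph Phi) ->
  (forall Phi Psi, F Phi -> F Psi -> subset Phi Psi \/ subset Psi Phi) ->
  self_prod_graph (fun p => exists Phi, F Phi /\ Phi p).
Proof.
intros FG Ftot. constructor.
- intros a y y' [A [FA HA]] [B [FB HB]].
  destruct (Ftot A B FA FB) as [h|h];
    [apply (graph_functional (FG B FB) a)|apply (graph_functional (FG A FA) a)]; auto.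
- intros a a' y [A [FA HA]] [B [FB HB]].
  destruct (Ftot A B FA FB) as [h|h];
    [apply (graph_injective (FG B FB) a a' y)|apply (graph_injective (FG A FA) a a' y)]; auto.
- intros j m z m' [A [FA HA]].
  destruct (graph_total (FG A FA) j m z m' HA) as [z' Hz']; eauto.
- intros a y [A [FA HA]].
  destruct (graph_range (FG A FA) a y HA) as [m [z Hz]]. exists m, z; eauto.
- intros j [m [z [A [FA HA]]]].
  destruct (@graph_onto _ (FG A FA) j) as [a Ha]; [exists m, z; auto|eauto].
Qed.

(* Adjoin a countable set [g] of new roots, mapping [(g a, m)] to [g (to_nat (a, m))]. *)
Lemma self_prod_graph_extend (Phi : (J * nat) * J -> Prop) (g : nat -> J) :
  self_prod_graph Phi -> (forall n, ~ graph_root Phi (g n)) ->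
  (forall n m, g n = g m -> n = m) ->
  self_prod_graph (fun p => Phi p \/ exists a m, p = ((g a, m), g (to_nat (a, m)))).
Proof.
intros HPhi gfresh ginj. constructor.
- intros a y y' [h|[b [m E]]] [h'|[b' [m' E']]]; try injection E as -> ->;
    try injection E' as -> ->.
  + exact (graph_functional HPhi _ _ _ h h').
  + exfalso; apply (gfresh b'); exists m', y; auto.
  + exfalso; apply (gfresh b); exists m, y'; auto.
  + injection E' as Eb ->. apply ginj in Eb; subst; auto.
- intros a a' y [h|[b [m E]]] [h'|[b' [m' E']]].
  + exact (graph_injective HPhi _ _ _ h h').
  + injection E' as -> ->.
    exfalso; apply (gfresh (to_nat (b', m'))), (graph_range HPhi _ _ h).
  + injection E as -> ->.
    exfalso; apply (gfresh (to_nat (b, m))), (graph_range HPhi _ _ h').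
  + assert (Ebm : (b, m) = (b', m')) by (apply to_nat_inj, ginj; congruence).
    injection Ebm as -> ->. congruence.
- intros j m z m' [h|[b [k E]]].
  + destruct (graph_total HPhi _ _ _ m' h) as [z' Hz']. exists z'; left; auto.
  + injection E as -> -> ->. exists (g (to_nat (b, m'))). right; eauto.
- intros a y [h|[b [k E]]].
  + destruct (graph_range HPhi _ _ h) as [m [z Hz]]. exists m, z; left; auto.
  + injection E as -> ->. exists 0, (g (to_nat (to_nat (b, k), 0))). right; eauto.
- intros j [m [z [h|[b [k E]]]]].
  + destruct (@graph_onto _ HPhi j) as [a Ha]; [exists m, z; auto|]. exists a; left; auto.
  + injection E as -> -> ->. destruct (of_nat b) as [c d] eqn:Eb.
    exists (g c, d). right. exists c, d. rewrite <- Eb, cancel_to_of. auto.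
Qed.

Lemma self_prod_graph_maximal_cofinite (Phi : (J * nat) * J -> Prop) :
  self_prod_graph Phi ->
  (forall Psi, subset Phi Psi -> self_prod_graph Psi -> subset Psi Phi) ->
  finite (fun j => ~ graph_root Phi j).
Proof.
intros HPhi Phimax. apply NNPP; intro Cinf.
destruct (infinite_injection Cinf) as [g [gfresh ginj]].
pose proof (self_prod_graph_extend g HPhi gfresh ginj) as Hext.
apply (gfresh 0). exists 0, (g (to_nat (0, 0))).
apply (Phimax _ (fun p h => or_introl h) Hext). right; eauto.
Qed.

Lemma self_prod_graph_surjection (Phi : (J * nat) * J -> Prop) (L : list J) (j0 : J) :
  self_prod_graph Phi -> graph_root Phi j0 -> (forall j, ~ graph_root Phi j -> In j L) ->
  exists h : J -> J * nat, forall jm, exists j, h j = jm.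
Proof.
intros HPhi Hj0 HL.
assert (Hpre : forall y, exists a, graph_root Phi y -> Phi (a, y)).
{ intro y. destruct (classic (graph_root Phi y)) as [h|h].
  - destruct (graph_onto HPhi h) as [a Ha]; eauto.
  - exists (j0, 0); contradiction. }
destruct (choice _ Hpre) as [pre Hpre'].
(* Even indices enumerate the roots, odd indices enumerate [L * nat]. *)
exists (fun y => let (j, m) := pre y in
          if Nat.even m then (j, Nat.div2 m)
          else let (i, k) := of_nat (Nat.div2 m) in (nth i L j0, k)).
intros [y k].
assert (Hroot_total : forall j m, graph_root Phi j -> exists z, Phi ((j, m), z)).
{ intros j m [m0 [z0 Hz0]]. exact (graph_total HPhi _ _ _ m Hz0). }
assert (Hpre_eq : forall j m z, Phi ((j, m), z) -> pre z = (j, m)).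
{ intros j m z Hz. apply (graph_injective HPhi _ _ z); auto.
  apply Hpre'. exact (graph_range HPhi _ _ Hz). }
destruct (classic (graph_root Phi y)) as [Hy|Hy].
- destruct (Hroot_total y (2 * k) Hy) as [z Hz]. exists z.
  rewrite (Hpre_eq _ _ _ Hz).
  replace (Nat.even (2 * k)) with true by (symmetry; apply Nat.even_spec; exists k; lia).
  rewrite Nat.div2_double. auto.
- destruct (In_nth L y j0 (HL y Hy)) as [i [_ Ei]].
  destruct (Hroot_total j0 (S (2 * to_nat (i, k))) Hj0) as [z Hz]. exists z.
  rewrite (Hpre_eq _ _ _ Hz).
  replace (Nat.even (S (2 * to_nat (i, k)))) with false
    by (rewrite Nat.even_succ, <- Nat.negb_even, Nat.even_mul; reflexivity).
  rewrite Nat.div2_succ_double, cancel_of_to, Ei. auto.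
Qed.

Lemma finite_or_surjection_prod_nat :
  finite (fun _ : J => True) \/ exists h : J -> J * nat, forall jm, exists j, h j = jm.
Proof.
destruct (Zorn_union self_prod_graph self_prod_graph_chain) as [Phi [HPhi Phimax]].
destruct (self_prod_graph_maximal_cofinite HPhi Phimax) as [L HL].
destruct (classic (exists j0, graph_root Phi j0)) as [[j0 Hj0]|Hnone].
- right. exact (self_prod_graph_surjection L HPhi Hj0 HL).
- left. exists L. intros j _. apply HL. intro; apply Hnone; eauto.
Qed.

End SelfProductNat.

Lemma MA_countable_nat : MA_countable nat.
Proof.
intros P le [Hrefl [Htrans _]] _ [p0] D HD.
destruct (choice _ (fun np : nat * P => HD (fst np) (snd np))) as [step Hstep].
pose (chain := fix chain n := match n with 0 => p0 | S k => step (k, chain k) end).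
assert (Hchain : forall n m, n <= m -> le (chain m) (chain n)).
{ intros n m Hnm; induction Hnm; [apply Hrefl|].
  eapply Htrans; [apply (Hstep (m, chain m))|exact IHHnm]. }
exists (fun p => exists n, le (chain n) p). split; [split; [|split]|].
- exists p0, 0. apply Hrefl.
- intros p q [n Hn] Hpq. exists n. eapply Htrans; eauto.
- intros p q [n Hn] [m Hm]. exists (chain (max n m)). split.
  + exists (max n m); apply Hrefl.
  + split; [apply (Htrans _ (chain n))|apply (Htrans _ (chain m))]; auto; apply Hchain; lia.
- intro n. exists (chain (S n)). split.
  + exists (S n); apply Hrefl.
  + apply (Hstep (n, chain n)).
Qed.

Lemma MA_countable_surj (A B : Type) (h : A -> B) :
  (forall b, exists a, h a = b) -> MA_countable A -> MA_countable B.
Proof.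
intros hsurj HA P le Hle Pcnt Pinh D HD.
destruct (HA P le Hle Pcnt Pinh (fun a => D (h a)) (fun a => HD (h a))) as [G [HG Gmeets]].
exists G; split; auto. intro b; destruct (hsurj b) as [a <-]; apply Gmeets.
Qed.

Lemma MA_countable_prod_nat (J : Type) (j0 : J) : MA_countable J -> MA_countable (J * nat).
Proof.
intro HJ. destruct (finite_or_surjection_prod_nat J) as [[L HL]|[h hsurj]].
- apply (MA_countable_surj (B := J * nat) (fun n => let (i, k) := of_nat n in (nth i L j0, k))).
  + intros [y k]. destruct (In_nth L y j0 (HL y Logic.I)) as [i [_ Ei]].
    exists (to_nat (i, k)). rewrite cancel_of_to, Ei. auto.
  + exact MA_countable_nat.
- exact (MA_countable_surj h hsurj HJ).
Qed.

Lemma countable_prod (A B : Type) :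
  countable_type A -> countable_type B -> countable_type (A * B).
Proof.
intros [f finj] [g ginj]. exists (fun ab => to_nat (f (fst ab), g (snd ab))).
intros [a b] [a' b'] E. apply to_nat_inj in E. injection E as Ea Eb.
apply finj in Ea; apply ginj in Eb; subst; auto.
Qed.

Lemma countable_list (A : Type) : countable_type A -> countable_type (list A).
Proof.
intros [f finj].
exists (fix code l := match l with [] => 0 | x :: l' => S (to_nat (f x, code l')) end).
intro l; induction l as [|x l IH]; intros [|y l'] E; try discriminate; auto.
apply Nat.succ_inj, to_nat_inj in E. injection E as Ex El.
apply finj in Ex; apply IH in El; subst; auto.
Qed.

Lemma countable_nat : countable_type nat.
Proof. exists (fun n => n); auto. Qed.

Definition decide (Q : Prop) : bool := if excluded_middle_informative Q then true else false.

Lemma filter_decide_In {X : Type} (Q : X -> Prop) l x :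
  In x (filter (fun y => decide (Q y)) l) <-> In x l /\ Q x.
Proof.
rewrite filter_In. unfold decide.
destruct (excluded_middle_informative (Q x)); split; intros [? ?]; auto; discriminate.
Qed.

Lemma finite_subset {X : Type} (A B : X -> Prop) : finite B -> subset A B -> finite A.
Proof. intros [l Hl] H; exists l; auto. Qed.

Section IdealFacts.
Variables (X : Type) (I : (X -> Prop) -> Prop).
Hypothesis HI : is_ideal I.

Lemma ideal_subset A B : I B -> subset A B -> I A.
Proof. destruct HI as [h _]; eauto. Qed.

Lemma ideal_union A B : I A -> I B -> I (fun x => A x \/ B x).
Proof. destruct HI as [_ [h _]]; eauto. Qed.

Lemma ideal_finite A : finite A -> I A.
Proof. destruct HI as [_ [_ [_ h]]]; eauto. Qed.

Lemma positive_finite_modification A C F :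
  ~ I A -> finite F -> subset A (fun x => C x \/ F x) -> ~ I C.
Proof.
intros hA hF hs hC. apply hA.
eapply ideal_subset; [apply ideal_union; [exact hC|apply ideal_finite; exact hF]|exact hs].
Qed.

Lemma p_plus_pseudo_intersection (An : nat -> X -> Prop) :
  p_plus I -> (forall n, ~ I (An n)) -> (forall n, subset (An (S n)) (An n)) ->
  exists A, ~ I A /\ subset A (An 0) /\ forall n, finite (fun x => A x /\ ~ An n x).
Proof.
intros Hp Anpos Andec. destruct (Hp An Anpos Andec) as [A [Apos Afin]].
exists (fun x => A x /\ An 0 x). split; [|split].
- apply (positive_finite_modification (F := fun x => A x /\ ~ An 0 x) Apos); auto.
  intros x Ax. destruct (classic (An 0 x)); [left|right]; auto.
- intros x [_ h]; auto.
- intro n. eapply finite_subset; [apply (Afin n)|]. intros x [[? ?] ?]; auto.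
Qed.

Lemma crowded_dense_positive (tau : (X -> Prop) -> Prop) (D U : X -> Prop) :
  I_tau_crowded I tau D -> dense tau D -> tau U -> nonempty U -> ~ I (fun x => D x /\ U x).
Proof.
intros Dcr Dde HU Une HDU. destruct (Dcr U HU) as [h|h]; auto.
destruct (Dde U HU Une) as [x Hx]. exact (h x Hx).
Qed.

Lemma I_tau_crowded_equiv (tau : (X -> Prop) -> Prop) (A B : X -> Prop) :
  (forall x, A x <-> B x) -> I_tau_crowded I tau A -> I_tau_crowded I tau B.
Proof.
intros AB HA U HU. destruct (HA U HU) as [h|h].
- left. intros x [Bx Ux]. apply (h x). split; auto. apply AB; auto.
- right. intro HB. apply h. eapply ideal_subset; [exact HB|].
  intros x [Ax Ux]. split; auto. apply AB; auto.
Qed.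

End IdealFacts.

Lemma dense_equiv {X : Type} (tau : (X -> Prop) -> Prop) (A B : X -> Prop) :
  (forall x, A x <-> B x) -> dense tau A -> dense tau B.
Proof.
intros AB HA U HU Une. destruct (HA U HU Une) as [x [Ax Ux]].
exists x. split; auto. apply AB; auto.
Qed.

Lemma decreasing_antitone {X : Type} (D : nat -> X -> Prop) :
  (forall i, subset (D (S i)) (D i)) -> forall n m, n <= m -> subset (D m) (D n).
Proof. intros HD n m h; induction h; intros x Hx; auto. apply IHh, HD, Hx. Qed.

Lemma exit_level {X : Type} (D : nat -> X -> Prop) x n :
  D 0 x -> ~ D n x -> exists i, D i x /\ ~ D (S i) x.
Proof.
intro H0; induction n as [|n IH]; intro Hn; [contradiction|].
destruct (classic (D n x)); eauto.
Qed.

(* Level [i] collects the points of [K] that leave [D] at [S i], and those of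
   [K] staying in every [D n] with code [i]. *)
Lemma finite_levels_decomposition (X : Type) (D : nat -> X -> Prop) (K : X -> Prop) :
  countable_type X -> subset K (D 0) -> (forall k, finite (fun x => K x /\ ~ D k x)) ->
  exists L : nat -> list X,
    (forall i x, In x (L i) -> D i x) /\ forall x, (exists i, In x (L i)) <-> K x.
Proof.
intros [f finj] K0 Kfin.
assert (Hfiber : forall i, exists l : list X, forall x, f x = i -> In x l).
{ intro i. destruct (classic (exists x, f x = i)) as [[x0 Hx0]|h].
  - exists [x0]. intros x Hx. left. apply finj. congruence.
  - exists []. intros x Hx. apply h; eauto. }
destruct (choice _ Hfiber) as [fiber Hfib].
destruct (choice _ (fun i => Kfin (S i))) as [exiting Hexit].
exists (fun i => filter (fun x => decide (K x /\ D i x)) (exiting i ++ fiber i)). split.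
- intros i x Hx. apply filter_decide_In in Hx. tauto.
- intro x; split.
  + intros [i Hi]. apply filter_decide_In in Hi. tauto.
  + intro Kx. destruct (classic (forall n, D n x)) as [h|h].
    * exists (f x). apply filter_decide_In. split; auto.
      apply in_or_app; right. apply Hfib; auto.
    * apply not_all_ex_not in h as [n hn].
      destruct (exit_level D x n (K0 x Kx) hn) as [i [Di nDi]].
      exists i. apply filter_decide_In. split; auto.
      apply in_or_app; left. apply Hexit; auto.
Qed.

Record cond (X : Type) := Cond { pos : list X; neg : list X; lvl : nat }.

Lemma countable_cond (X : Type) : countable_type X -> countable_type (cond X).
Proof.
intro HX.
destruct (countable_prod (countable_prod (countable_list HX) (countable_list HX)) countable_nat)
  as [f finj].
exists (fun p => f ((pos p, neg p), lvl p)).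
intros [s t n] [s' t' n'] E. apply finj in E. injection E as -> -> ->. auto.
Qed.

Section Conditions.
Variables (X : Type) (D : nat -> X -> Prop).
Hypothesis HD : forall i, subset (D (S i)) (D i).

(* [pos] and [neg] are finite approximations of the generic set and of its
   complement; after [q], new points may only be taken from [D (lvl q)]. *)
Definition cond_lt (q p : cond X) : Prop :=
  lvl p < lvl q /\ incl (pos p) (pos q) /\ incl (neg p) (neg q) /\
  forall x, In x (pos q) -> ~ In x (pos p) -> D (lvl p) x /\ ~ In x (neg p).

Definition cond_le (q p : cond X) : Prop := q = p \/ cond_lt q p.

Lemma cond_lt_trans r q p : cond_lt r q -> cond_lt q p -> cond_lt r p.
Proof.
intros [lrq [srq [trq newr]]] [lqp [sqp [tqp newq]]]. split; [lia|split; [|split]].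
- eapply incl_tran; eauto.
- eapply incl_tran; eauto.
- intros x xr xp. destruct (classic (In x (pos q))) as [xq|xq]; auto.
  destruct (newr x xr xq) as [Dx nx]. split.
  + apply (decreasing_antitone D HD (m := lvl q)); [lia|exact Dx].
  + intro; apply nx, tqp; auto.
Qed.

Lemma cond_le_poset : is_poset cond_le.
Proof.
split; [|split].
- intro; left; auto.
- intros p q r [h|h] [h'|h']; subst; unfold cond_le; auto.
  right; eapply cond_lt_trans; eauto.
- intros p q [h|[h _]] [h'|[h' _]]; auto. lia.
Qed.

Lemma cond_le_pos r q : cond_le r q -> incl (pos q) (pos r).
Proof. intros [->|h]; [apply incl_refl|apply h]. Qed.

End Conditions.

Section GenericSet.
Variables (X : Type) (I tau : (X -> Prop) -> Prop) (D : nat -> X -> Prop).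
Hypothesis HI : is_ideal I.
Hypothesis HD : forall i, subset (D (S i)) (D i).
Variables (J : Type) (B : J -> X -> Prop).
Hypothesis HB : is_pi_base tau B.
Variables (A : J -> X -> Prop) (N : J -> nat -> (X -> Prop) -> Prop).
Hypothesis A_sub : forall j, subset (A j) (fun x => D 0 x /\ B j x).
Hypothesis A_almost : forall j n, finite (fun x => A j x /\ ~ D n x).
Hypothesis N_nowhere_dense : forall j m, nowhere_dense_in (A j) (N j m).
Hypothesis N_cover : forall j C, subset C (A j) -> I C -> exists m, N j m C.

(* [q] has level at least [m] and already forces the generic set, traced on
   [A j], into a basic open set of [2^(A j)] missing [N j m]. *)
Definition cond_avoids (j : J) (m : nat) (q : cond X) : Prop :=
  m <= lvl q /\ exists s t,
    (forall x, In x s -> In x (pos q) /\ A j x) /\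
    (forall x, In x t -> In x (neg q) /\ ~ In x (pos q)) /\
    forall C, subset C (A j) -> cyl s t C -> ~ N j m C.

Lemma cond_avoids_dense j m : dense_in_poset (cond_le D) (cond_avoids j m).
Proof.
intros [s t n].
destruct (A_almost j n) as [l Hl].
(* [t0]: points of [A j] excluded by, or no longer addable after, [(s, t, n)]. *)
set (s0 := filter (fun x => decide (A j x)) s).
set (t0 := filter (fun x => decide (A j x /\ ~ In x s /\ (In x t \/ ~ D n x))) (t ++ l)).
destruct (@N_nowhere_dense j m s0 t0) as [s' [t' [[s'A [t'A s't'] ] [ss' [tt' Hs't']]]]].
{ split; [|split].
  - intros x Hx; apply filter_decide_In in Hx; tauto.
  - intros x Hx; apply filter_decide_In in Hx; tauto.
  - intros x h1 h2; apply filter_decide_In in h1; apply filter_decide_In in h2; tauto. }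
exists (Cond (s ++ s') (t ++ t') (n + m + 1)). split.
- right. split; [simpl; lia|split; [apply incl_appl, incl_refl|split; [apply incl_appl, incl_refl|]]].
  simpl. intros x Hx xs. apply in_app_or in Hx as [Hx|Hx]; [contradiction|].
  apply NNPP; intro C. apply (s't' x Hx), tt'. apply filter_decide_In. split.
  + apply in_or_app. destruct (classic (In x t)); [left|right]; auto.
    apply Hl. split; [apply s'A; auto|intro; apply C; auto].
  + split; [apply s'A; auto|split; auto].
    destruct (classic (In x t)); [left; auto|right; intro; apply C; auto].
- split; [simpl; lia|]. exists s', t'. simpl. split; [|split]; auto.
  + intros x Hx; split; auto. apply in_or_app; auto.
  + intros x Hx; split; [apply in_or_app; auto|]. intro h.
    apply (s't' x); auto. apply in_app_or in h as [h|h]; auto.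
    apply ss'. apply filter_decide_In; auto.
Qed.

Variable G : cond X -> Prop.
Hypothesis G_filter : is_filter (cond_le D) G.
Hypothesis G_meets : forall jm, exists q, G q /\ cond_avoids (fst jm) (snd jm) q.

Definition generic_set (x : X) : Prop := D 0 x /\ exists q, G q /\ In x (pos q).

Lemma generic_common_lt p q x :
  G p -> G q -> In x (pos q) -> ~ In x (pos p) -> D (lvl p) x /\ ~ In x (neg p).
Proof.
intros Gp Gq xq xp. destruct G_filter as [_ [_ Gdir]].
destruct (Gdir p q Gp Gq) as [r [_ [[->|rp] rq]]].
- exfalso; apply xp, (cond_le_pos rq); auto.
- apply rp; auto. apply (cond_le_pos rq); auto.
Qed.

Lemma generic_almost_in (j : J) (k : nat) : finite (fun x => generic_set x /\ ~ D k x).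
Proof.
destruct (G_meets (j, k)) as [p [Gp [kp _]]].
exists (pos p). intros x [[_ [q [Gq xq]]] nDk].
apply NNPP; intro xp. apply nDk.
apply (decreasing_antitone D HD (m := lvl p)); auto.
exact (proj1 (generic_common_lt x Gp Gq xq xp)).
Qed.

Lemma generic_positive j : ~ I (fun x => generic_set x /\ A j x).
Proof.
intro HK. destruct (N_cover (fun x h => proj2 h) HK) as [m Hm].
destruct (G_meets (j, m)) as [q [Gq [_ [s [t [sq [tq Hst]]]]]]].
apply (Hst (fun x => generic_set x /\ A j x) (fun x h => proj2 h)); auto. split.
- intros x xs. destruct (sq x xs) as [xq Ax]. split; auto. split; [exact (proj1 (A_sub Ax))|eauto].
- intros x xt [[_ [q' [Gq' xq']]] _]. destruct (tq x xt) as [xnq xq].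
  exact (proj2 (generic_common_lt x Gq Gq' xq' xq) xnq).
Qed.

Lemma generic_dense : dense tau generic_set.
Proof.
intros U HU Une. destruct (proj2 HB U HU Une) as [j Hj].
apply NNPP; intro C. apply (@generic_positive j), (ideal_finite HI). exists [].
intros x [Kx Ax]. apply C. exists x. split; auto. apply Hj, (A_sub Ax).
Qed.

Lemma generic_crowded : I_tau_crowded I tau generic_set.
Proof.
intros U HU. destruct (classic (exists x, generic_set x /\ U x)) as [[x [Kx Ux]]|h].
- right. intro HK. destruct (proj2 HB U HU (ex_intro _ x Ux)) as [j Hj].
  apply (@generic_positive j). eapply (ideal_subset HI); [exact HK|].
  intros y [Ky Ay]. split; auto. apply Hj, (A_sub Ay).
- left. intros y hy; apply h; eauto.
Qed.

End GenericSet.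

Lemma open_positive_pseudo_intersection (X : Type) (I tau : (X -> Prop) -> Prop)
    (D : nat -> X -> Prop) (U : X -> Prop) :
  is_ideal I -> p_plus I -> (forall i, subset (D (S i)) (D i)) ->
  (forall i, I_tau_crowded I tau (D i) /\ dense tau (D i)) -> tau U -> nonempty U ->
  exists A, ~ I A /\ subset A (fun x => D 0 x /\ U x) /\
    forall n, finite (fun x => A x /\ ~ D n x).
Proof.
intros HI Hp HD HDc HU Une.
destruct (p_plus_pseudo_intersection HI (fun n x => D n x /\ U x)) as [A [Apos [Asub Afin]]];
  auto.
- intro n. apply (crowded_dense_positive (tau := tau)); auto; apply HDc.
- intros n x [? ?]; split; auto. apply HD; auto.
- exists A. split; [|split]; auto. intro n.
  eapply finite_subset; [apply (Afin n)|]. intros x [Ax nDx]. split; auto. intros [? ?]; auto.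
Qed.

Lemma hereditarily_meager_cover (X : Type) (I : (X -> Prop) -> Prop) (A : X -> Prop) :
  hereditarily_meager I -> ~ I A ->
  exists N : nat -> (X -> Prop) -> Prop, (forall m, nowhere_dense_in A (N m)) /\
    forall C, subset C A -> I C -> exists m, N m C.
Proof.
intros Hhm Apos. destruct (Hhm A Apos) as [N [Nnd Ncov]].
exists N. split; auto.
Qed.

Unset Implicit Arguments.

Theorem mainTheorem6 (X : Type) (I tau : (X -> Prop) -> Prop) (D : nat -> X -> Prop) :
  countably_infinite X ->
  is_ideal I -> p_plus I -> hereditarily_meager I ->
  is_topology tau -> I_crowded_topology I tau -> piweight_lt_mc tau ->
  (forall i, subset (D (S i)) (D i)) ->
  (forall i, I_tau_crowded I tau (D i) /\ dense tau (D i)) ->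
  exists K : nat -> list X,
    (forall i x, In x (K i) -> D i x) /\
    dense tau (fun x => exists i, In x (K i)) /\
    I_tau_crowded I tau (fun x => exists i, In x (K i)).
Proof.
intros [Xcnt Xinf] HI Hp Hhm Htop _ [J [B [HB HMA]]] HD HDc.
assert (Xne : nonempty (fun _ : X => True)).
{ apply NNPP; intro Xempty. apply Xinf. exists []. intros x _. apply Xempty. exists x; auto. }
destruct (proj2 HB _ (proj1 (proj2 Htop)) Xne) as [j0 _].
destruct (choice _ (fun j => open_positive_pseudo_intersection D HI Hp HD HDc
                               (proj1 (proj1 HB j)) (proj2 (proj1 HB j))))
  as [A HA].
destruct (choice _ (fun j => hereditarily_meager_cover (A j) Hhm (proj1 (HA j)))) as [N HN].
destruct (MA_countable_prod_nat j0 HMA (cond_le_poset D HD) (countable_cond Xcnt)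
            (inhabits (Cond [] [] 0)) (fun jm => cond_avoids A N (fst jm) (snd jm)))
  as [G [Gfilter Gmeets]].
{ intros [j m]. apply cond_avoids_dense; [apply HA|apply HN]. }
destruct (finite_levels_decomposition D (K := generic_set D G) Xcnt) as [K [KD Kgen]].
{ intros x [D0x _]; auto. }
{ exact (generic_almost_in HD Gfilter Gmeets j0). }
exists K. split; [exact KD|split].
- apply (dense_equiv (A := generic_set D G)); [intro x; symmetry; apply Kgen|].
  apply (generic_dense HI HB (A := A) (N := N)); auto; [apply HA|apply HN].
- apply (I_tau_crowded_equiv HI (A := generic_set D G)); [intro x; symmetry; apply Kgen|].
  apply (generic_crowded HI HB (A := A) (N := N)); auto; [apply HA|apply HN].
Qed.
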